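(* Let $\mathcal{S}$, $\mathcal{C}$ and the inequality $(\star)$ be as in the context, and suppose Assumption 1 holds. If $\bar{\boldsymbol{\pi}}\in\mathcal{C}$ yields an inequality $(\star)$ that is valid for $\operatorname{proj}_{\mathbf{x}}\operatorname{conv}(\mathcal{S})$ and non-vertical, then $\bar\alpha^j_k>0$ for some $j\in M\cup\{0\}$ and $k\in K$.
   Context: Let $N=\{1,\dots,n\}$, $M=\{1,\dots,m\}$, $K=\{1,\dots,\kappa\}$, $T=\{1,\dots,\tau\}$. Given $A^k\in\mathbb{R}^{m\times n}$ (entries $A^k_{j,i}$), $\mathbf{b}^k\in\mathbb{R}^n$, $\mathbf{c}^k\in\mathbb{R}^m$ (entries $c^k_j$), $d_k\in\mathbb{R}$ for $k\in K$, $E\in\mathbb{R}^{\tau\times n}$, $\mathbf{f}\in\mathbb{R}^\tau$, let $\Xi=\{\mathbf{x}\in\mathbb{R}^n_+ : E\mathbf{x}\ge\mathbf{f}\}$, $\Delta_m=\{\mathbf{y}\in\mathbb{Z}^m_+ : \mathbf{1}^\top\mathbf{y}\le 1\}$, $\mathcal{S}=\{(\mathbf{x};\mathbf{y})\in\Xi\times\Delta_m : \mathbf{y}^\top A^k\mathbf{x}+(\mathbf{b}^k)^\top\mathbf{x}+(\mathbf{c}^k)^\top\mathbf{y}\ge d_k\ \forall k\in K\}$, and $\mathcal{S}(\mathbf{e}^j)=\{(\mathbf{x};\mathbf{y})\in\mathcal{S}:\mathbf{y}=\mathbf{e}^j\}$ where $\mathbf{e}^j$ is the $j$-th unit vector ($j\in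 M$) and $\mathbf{e}^0=\mathbf{0}$. Assumption 1: $\mathcal{S}(\mathbf{e}^j)\ne\emptyset$ for all $j\in M\cup\{0\}$ and all these sets share the same recession cone. For $\boldsymbol{\pi}=(\boldsymbol{\alpha}^0,\dots,\boldsymbol{\alpha}^m;\boldsymbol{\beta}^0,\dots,\boldsymbol{\beta}^m;\boldsymbol{\gamma}^0,\dots,\boldsymbol{\gamma}^m;\theta_0,\dots,\theta_m)$ with $\boldsymbol{\alpha}^j\in\mathbb{R}^\kappa$, $\boldsymbol{\beta}^j\in\mathbb{R}^\tau$, $\boldsymbol{\gamma}^j\in\mathbb{R}^n$, $\theta_j\in\mathbb{R}$, define $\Phi_{i,j}(\boldsymbol{\pi})=\sum_{k=1}^\kappa\big((A^k_{j,i}+b^k_i)\alpha^j_k-b^k_i\alpha^0_k\big)+\sum_{t=1}^\tau E_{t,i}(\beta^j_t-\beta^0_t)$ and $\Psi_j(\boldsymbol{\pi})=\sum_{k=1}^\kappa\big((c^k_j-d_k)\alpha^j_k+d_k\alpha^0_k\big)+\sum_{t=1}^\tau f_t(\beta^0_t-\beta^j_t)$. $\mathcal{C}$ is the set of all such $\boldsymbol{\pi}\ge\mathbf{0}$ with $\Phi_{i,j}(\boldsymbol{\pi})+\gamma^j_i-\gamma^0_i=0$ for all $i\in N,j\in M$ and $\Psi_j(\boldsymbol{\pi})+\theta_j-\theta_0=0$ for all $j\in M$. The inequality $(\star)$ associated with $\bar{\boldsymbol{\pi}}$ is $\big(\sum_k\bar\alpha^0_k\mathbf{b}^k+E^\top\bar{\boldsymbol{\beta}}^0+\bar{\boldsymbol{\gamma}}^0\big)^\top\mathbf{x}\ge\sum_k\bar\alpha^0_kd_k+(\bar{\boldsymbol{\beta}}^0)^\top\mathbf{f}-\bar\theta_0$.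 A valid inequality for $\operatorname{proj}_{\mathbf{x}}\operatorname{conv}(\mathcal{S})$ is called vertical if it is implied by the constraints describing $\Xi$ (i.e., $E\mathbf{x}\ge\mathbf{f}$, $\mathbf{x}\ge\mathbf{0}$). *)

From HB Require Import structures.
From mathcomp Require Import all_boot all_order all_algebra.
From mathcomp Require Import reals.
Set Implicit Arguments. Unset Strict Implicit. Unset Printing Implicit Defensive.
Import Order.TTheory GRing.Theory Num.Theory.
Local Open Scope ring_scope.

Section Defs.
Variable R : realType.
Variables (n m kappa tau : nat).
(* Data: A k j i = A^k_{j,i}; b k i = b^k_i; c k j = c^k_j; d k = d_k;
   E t i = E_{t,i}; f t = f_t. *)
Variable A : 'I_kappa -> 'I_m -> 'I_n -> R.
Variable b : 'I_kappa -> 'I_n -> R.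
Variable c : 'I_kappa -> 'I_m -> R.
Variable d : 'I_kappa -> R.
Variable E : 'I_tau -> 'I_n -> R.
Variable f : 'I_tau -> R.

Definition inXi (x : 'I_n -> R) : Prop :=
  (forall i, 0 <= x i) /\ (forall t, \sum_(i < n) E t i * x i >= f t).

Definition inDelta (y : 'I_m -> R) : Prop :=
  (forall j, y j \is a Num.int) /\ (forall j, 0 <= y j) /\ (\sum_(j < m) y j <= 1).

Definition inS (x : 'I_n -> R) (y : 'I_m -> R) : Prop :=
  inXi x /\ inDelta y /\
  forall k, \sum_(j < m) \sum_(i < n) y j * A k j i * x i
            + \sum_(i < n) b k i * x i + \sum_(j < m) c k j * y j >= d k.

(* unit vectors e^j, j in M u {0}, encoded by 'I_m.+1 (ord0 is e^0 = 0,
   lift ord0 j is e^{j+1}) *)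
Definition unitv (j : 'I_m.+1) : 'I_m -> R :=
  fun l => if j == lift ord0 l then 1 else 0.

Definition inSe (j : 'I_m.+1) (x : 'I_n -> R) (y : 'I_m -> R) : Prop :=
  inS x y /\ y = unitv j.

Definition inRecCone (P : ('I_n -> R) -> ('I_m -> R) -> Prop)
  (rx : 'I_n -> R) (ry : 'I_m -> R) : Prop :=
  forall x y, P x y -> forall t : R, 0 <= t ->
    P (fun i => x i + t * rx i) (fun j => y j + t * ry j).

Definition assumption1 : Prop :=
  (forall j, exists x y, inSe j x y) /\
  (forall j1 j2 rx ry, inRecCone (inSe j1) rx ry <-> inRecCone (inSe j2) rx ry).

Definition inConvS (x : 'I_n -> R) (y : 'I_m -> R) : Prop :=
  exists (p : nat) (lam : 'I_p -> R) (xs : 'I_p -> 'I_n -> R) (ys : 'I_p -> 'I_m -> R),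
    (forall l, 0 <= lam l) /\ \sum_(l < p) lam l = 1 /\
    (forall l, inS (xs l) (ys l)) /\
    (forall i, x i = \sum_(l < p) lam l * xs l i) /\
    (forall j, y j = \sum_(l < p) lam l * ys l j).

Definition inProjConvS (x : 'I_n -> R) : Prop := exists y, inConvS x y.

Definition valid_on (P : ('I_n -> R) -> Prop) (a : 'I_n -> R) (r : R) : Prop :=
  forall x, P x -> \sum_(i < n) a i * x i >= r.

Variables (alpha : 'I_m.+1 -> 'I_kappa -> R) (beta : 'I_m.+1 -> 'I_tau -> R)
          (gamma : 'I_m.+1 -> 'I_n -> R) (theta : 'I_m.+1 -> R).

Definition Phi (i : 'I_n) (j : 'I_m) : R :=
  \sum_(k < kappa) ((A k j i + b k i) * alpha (lift ord0 j) k - b k i * alpha ord0 k)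
  + \sum_(t < tau) E t i * (beta (lift ord0 j) t - beta ord0 t).

Definition Psi (j : 'I_m) : R :=
  \sum_(k < kappa) ((c k j - d k) * alpha (lift ord0 j) k + d k * alpha ord0 k)
  + \sum_(t < tau) f t * (beta ord0 t - beta (lift ord0 j) t).

Definition inC : Prop :=
  (forall j k, 0 <= alpha j k) /\ (forall j t, 0 <= beta j t) /\
  (forall j i, 0 <= gamma j i) /\ (forall j, 0 <= theta j) /\
  (forall i j, Phi i j + gamma (lift ord0 j) i - gamma ord0 i = 0) /\
  (forall j, Psi j + theta (lift ord0 j) - theta ord0 = 0).

Definition star_coef (i : 'I_n) : R :=
  \sum_(k < kappa) alpha ord0 k * b k i + \sum_(t < tau) E t i * beta ord0 t
  + gamma ord0 i.
Definition star_rhs : R :=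
  \sum_(k < kappa) alpha ord0 k * d k + \sum_(t < tau) beta ord0 t * f t
  - theta ord0.
End Defs.

(* A valid inequality is vertical if it is implied by E x >= f, x >= 0,
   i.e. valid for Xi. *)
Definition vertical (R : realType) n tau (E : 'I_tau -> 'I_n -> R) (f : 'I_tau -> R)
  (a : 'I_n -> R) (r : R) : Prop := valid_on (inXi E f) a r.

From mathcomp Require Import all_boot all_order all_algebra.
From mathcomp Require Import reals.
Set Implicit Arguments. Unset Strict Implicit. Unset Printing Implicit Defensive.
Import Order.TTheory GRing.Theory Num.Theory.
Local Open Scope ring_scope.

(* If alpha^0 = 0, inequality (star) is the aggregation of [E x >= f] with
   multipliers beta^0 and of [x >= 0] with multipliers gamma^0, weakened by
   theta_0 >= 0; it is therefore implied by the constraints of Xi, i.e.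
   vertical.  So a non-vertical (star) forces some alpha^0_k > 0. *)

Lemma valid_on_Xi_aggregation (R : realType) (n tau : nat)
  (E : 'I_tau -> 'I_n -> R) (f : 'I_tau -> R)
  (beta : 'I_tau -> R) (gamma : 'I_n -> R) (theta : R) :
  (forall t, 0 <= beta t) -> (forall i, 0 <= gamma i) -> 0 <= theta ->
  valid_on (inXi E f)
    (fun i => \sum_(t < tau) E t i * beta t + gamma i)
    (\sum_(t < tau) beta t * f t - theta).
Proof.
move=> beta_ge0 gamma_ge0 theta_ge0 x [x_ge0 Ex_ge_f].
have aggregate_E : \sum_(t < tau) beta t * f t
    <= \sum_(i < n) (\sum_(t < tau) E t i * beta t) * x i.
  under [X in _ <= X]eq_bigr => i _ do rewrite big_distrl /=.
  rewrite exchange_big /=; apply: ler_sum => t _.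
  under eq_bigr => i _ do rewrite mulrAC.
  by rewrite -big_distrl /= [X in _ <= X]mulrC ler_wpM2l.
have aggregate_x : 0 <= \sum_(i < n) gamma i * x i.
  by apply: sumr_ge0 => i _; rewrite mulr_ge0.
under [X in _ <= X]eq_bigr => i _ do rewrite mulrDl.
rewrite big_split /= lerBlDr.
by apply: (le_trans aggregate_E); rewrite -addrA lerDl addr_ge0.
Qed.

Lemma vertical_star_of_alpha0 (R : realType) (n m kappa tau : nat)
  (b : 'I_kappa -> 'I_n -> R) (d : 'I_kappa -> R)
  (E : 'I_tau -> 'I_n -> R) (f : 'I_tau -> R)
  (alpha : 'I_m.+1 -> 'I_kappa -> R) (beta : 'I_m.+1 -> 'I_tau -> R)
  (gamma : 'I_m.+1 -> 'I_n -> R) (theta : 'I_m.+1 -> R) :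
  (forall k, alpha ord0 k = 0) ->
  (forall t, 0 <= beta ord0 t) -> (forall i, 0 <= gamma ord0 i) ->
  0 <= theta ord0 ->
  vertical E f (star_coef b E alpha beta gamma) (star_rhs d f alpha beta theta).
Proof.
move=> alpha0 beta_ge0 gamma_ge0 theta_ge0.
have alpha0_terms (F : 'I_kappa -> R) : \sum_(k < kappa) alpha ord0 k * F k = 0.
  by apply: big1 => k _; rewrite alpha0 mul0r.
move=> x Xi_x; rewrite /star_coef /star_rhs alpha0_terms add0r.
under [X in _ <= X]eq_bigr => i _ do rewrite alpha0_terms add0r.
exact: (valid_on_Xi_aggregation beta_ge0 gamma_ge0 theta_ge0 Xi_x).
Qed.

Theorem mainTheorem3 (R : realType) (n m kappa tau : nat)
  (A : 'I_kappa -> 'I_m -> 'I_n -> R) (b : 'I_kappa -> 'I_n -> R)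
  (c : 'I_kappa -> 'I_m -> R) (d : 'I_kappa -> R)
  (E : 'I_tau -> 'I_n -> R) (f : 'I_tau -> R)
  (alpha : 'I_m.+1 -> 'I_kappa -> R) (beta : 'I_m.+1 -> 'I_tau -> R)
  (gamma : 'I_m.+1 -> 'I_n -> R) (theta : 'I_m.+1 -> R) :
  assumption1 A b c d E f ->
  inC A b c d E f alpha beta gamma theta ->
  valid_on (inProjConvS A b c d E f) (star_coef b E alpha beta gamma)
           (star_rhs d f alpha beta theta) ->
  ~ vertical E f (star_coef b E alpha beta gamma) (star_rhs d f alpha beta theta) ->
  exists (j : 'I_m.+1) (k : 'I_kappa), 0 < alpha j k.
Proof.
move=> _ [alpha_ge0 [beta_ge0 [gamma_ge0 [theta_ge0 _]]]] _ not_vertical.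
have [k alpha0k_gt0 | alpha0_le0] := pickP (fun k => 0 < alpha ord0 k).
  by exists ord0, k.
have alpha0_eq0 k : alpha ord0 k = 0.
  by apply/eqP; rewrite eq_le alpha_ge0 andbT leNgt alpha0_le0.
case: not_vertical.
exact: (vertical_star_of_alpha0 b d alpha0_eq0 (beta_ge0 ord0) (gamma_ge0 ord0) (theta_ge0 ord0)).
Qed.
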